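(* Let $\mathcal C$ be a subcategory of the category of groups and $\mathcal H$ a class of maps for $\mathcal C$. If $\Gamma$ is an $\mathcal H$-invariant subgroup function on $\mathcal C$ such that every $f:A\to B$ in $\mathcal H$ induces a monomorphism $A/\Gamma(A)\to B/\Gamma(B)$, then $\Gamma_S(A)=\Gamma(A)$ for all $A\in\mathcal C$, i.e. $\Gamma$ is stable under $\mathcal H$. Similarly, if $\mathcal H=\{\mathcal H^n\}_{n\ge0}$ is a nested collection ($\mathcal H^{n+1}\subseteq\mathcal H^n$) of classes of maps and $\{\Gamma^n\}$ is an $\mathcal H$-invariant series such that every $f:A\to B$ in $\mathcal H^n$ induces a monomorphism $A/\Gamma^n(A)\to B/\Gamma^n(B)$, then $\{\Gamma^n\}$ is stable under $\mathcal H$, i.e. $\Gamma^n_S(A)=\Gamma^n(A)$ for all $n$ and all $A\in\mathcal C$.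
   Context: A subgroup function on $\mathcal C$ assigns to each $A\in\mathcal C$ a normal subgroup $\Gamma(A)\trianglelefteq A$. A series is a collection $\{\Gamma^n\}_{n\ge0}$ of subgroup functions with $\Gamma^0(A)=A$ and $\Gamma^{n+1}(A)\subset\Gamma^n(A)$. A class of maps for $\mathcal C$ is a set $\mathcal H$ of morphisms of $\mathcal C$ that contains all isomorphisms, is closed under composition, and is closed under nudge-outs: whenever $f:A\to B$ and $f':A\to B'$ lie in $\mathcal H$, there exist $C$ and $g:B\to C$, $g':B'\to C$ in $\mathcal H$ with $g\circ f=g'\circ f'$. $\Gamma$ is $\mathcal H$-invariant if $f(\Gamma(A))\subset\Gamma(B)$ for all $f:A\to B$ in $\mathcal H$; a series is $\{\mathcal H^n\}$-invariant if each $\Gamma^n$ is $\mathcal H^n$-invariant. The stabilization is $\Gamma_S(A)=\{a\in A\mid \exists f:A\to B \text{ in } \mathcal H \text{ with } f(a)\in\Gamma(B)\}$, and for a series $\Gamma^n_S$ is the stabilization of $\Gamma^n$ with respect to $\mathcal H^n$. *)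

Set Implicit Arguments.
Unset Strict Implicit.

Record Group := MkGroup {
  carrier :> Type;
  gmul : carrier -> carrier -> carrier;
  gone : carrier;
  ginv : carrier -> carrier;
  gmulA : forall x y z, gmul x (gmul y z) = gmul (gmul x y) z;
  gmul1 : forall x, gmul x gone = x;
  g1mul : forall x, gmul gone x = x;
  gmulV : forall x, gmul x (ginv x) = gone;
  gVmul : forall x, gmul (ginv x) x = gone
}.
Arguments gmul {g}.
Arguments gone {g}.
Arguments ginv {g}.

Definition is_hom (G H : Group) (f : G -> H) : Prop :=
  forall x y : G, f (gmul x y) = gmul (f x) (f y).

Definition is_normal_subgroup (G : Group) (S : G -> Prop) : Prop :=
  S gone /\
  (forall x y, S x -> S y -> S (gmul x y)) /\
  (forall x, S x -> S (ginv x)) /\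
  (forall g x, S x -> S (gmul (gmul (ginv g) x) g)).

Record GrpSubcat := {
  Obj : Type;
  grp : Obj -> Group;
  mor : forall A B : Obj, (grp A -> grp B) -> Prop;
  mor_hom : forall A B f, @mor A B f -> is_hom f;
  mor_id : forall A, @mor A A (fun x => x);
  mor_comp : forall A B C (f : grp A -> grp B) (g : grp B -> grp C),
      mor f -> mor g -> mor (fun x => g (f x))
}.

Arguments mor {g0} {A B} _ : rename.
Arguments grp g0 _ : rename, clear implicits.
Section Defs.
Variable C : GrpSubcat.

Definition is_iso (A B : Obj C) (f : grp C A -> grp C B) : Prop :=
  mor f /\ exists g : grp C B -> grp C A,
    mor g /\ (forall x, g (f x) = x) /\ (forall y, f (g y) = y).

Definition class_of_maps
  (H : forall A B : Obj C, (grp C A -> grp C B) -> Prop) : Prop :=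
  (forall A B f, @H A B f -> mor f) /\
  (forall A B f, @is_iso A B f -> H A B f) /\
  (forall A B D (f : grp C A -> grp C B) (g : grp C B -> grp C D),
      H A B f -> H B D g -> H A D (fun x => g (f x))) /\
  (forall A B B' (f : grp C A -> grp C B) (f' : grp C A -> grp C B'),
      H A B f -> H A B' f' ->
      exists D (g : grp C B -> grp C D) (g' : grp C B' -> grp C D),
        H B D g /\ H B' D g' /\ forall x, g (f x) = g' (f' x)).

Definition subgroup_function (Gam : forall A : Obj C, grp C A -> Prop) : Prop :=
  forall A, is_normal_subgroup (Gam A).

Definition H_invariant (H : forall A B : Obj C, (grp C A -> grp C B) -> Prop)
  (Gam : forall A : Obj C, grp C A -> Prop) : Prop :=
  forall A B f, @H A B f -> forall a, Gam A a -> Gam B (f a).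

(** f : A -> B induces an injective (= mono, in groups) map
    A/Gam(A) -> B/Gam(B), Gam(A) a |-> Gam(B) f(a):
    equal image cosets imply equal cosets. *)
Definition induces_mono (Gam : forall A : Obj C, grp C A -> Prop)
  (A B : Obj C) (f : grp C A -> grp C B) : Prop :=
  forall a a', Gam B (gmul (f a) (ginv (f a'))) -> Gam A (gmul a (ginv a')).

Definition stabilization (H : forall A B : Obj C, (grp C A -> grp C B) -> Prop)
  (Gam : forall A : Obj C, grp C A -> Prop) (A : Obj C) (a : grp C A) : Prop :=
  exists (B : Obj C) (f : grp C A -> grp C B), H A B f /\ Gam B (f a).

Definition is_series (Gam : nat -> forall A : Obj C, grp C A -> Prop) : Prop :=
  (forall n, subgroup_function (Gam n)) /\
  (forall A a, Gam 0 A a) /\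
  (forall n A a, Gam (S n) A a -> Gam n A a).

End Defs.

(* If [f] lies in [H] and [f a] lies in [Gam B], then [f a] and [f 1 = 1] have
   the same image coset, so injectivity of the induced map on quotients puts
   [a] in [Gam A]; conversely the identity, an isomorphism, lies in [H].  The
   series case is this applied at each level [n]. *)

Lemma gmul_idem_eq1 (G : Group) (x : G) : gmul x x = x -> x = gone.
Proof.
  intro Hxx.
  transitivity (gmul (gmul x x) (ginv x)).
  - now rewrite <- gmulA, gmulV, gmul1.
  - now rewrite Hxx, gmulV.
Qed.

Lemma ginv1 (G : Group) : @ginv G gone = gone.
Proof. rewrite <- (g1mul (ginv gone)). apply gmulV. Qed.

Lemma hom_gone (G K : Group) (f : G -> K) : is_hom f -> f gone = gone.
Proof.
  intro Hf. apply gmul_idem_eq1.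
  now rewrite <- Hf, gmul1.
Qed.

Section StableSubgroupFunction.
Variable C : GrpSubcat.

Lemma is_iso_id (A : Obj C) : is_iso (fun x : grp C A => x).
Proof.
  split; [apply mor_id|].
  exists (fun x => x). repeat split. apply mor_id.
Qed.

Variable H : forall A B : Obj C, (grp C A -> grp C B) -> Prop.
Variable Gam : forall A : Obj C, grp C A -> Prop.
Hypothesis H_class : class_of_maps H.

Lemma class_of_maps_id (A : Obj C) : H A A (fun x => x).
Proof. destruct H_class as [_ [H_iso _]]. apply H_iso, is_iso_id. Qed.

Lemma stabilization_id (A : Obj C) (a : grp C A) :
  Gam A a -> stabilization H Gam a.
Proof. intro Ha. exists A, (fun x => x). split; [apply class_of_maps_id | exact Ha]. Qed.

Lemma stabilization_mono (A : Obj C) (a : grp C A) :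
  (forall A B f, H A B f -> induces_mono Gam f) ->
  stabilization H Gam a -> Gam A a.
Proof.
  intros H_mono [B [f [Hf Hfa]]].
  destruct H_class as [H_mor _].
  pose proof (H_mono _ _ _ Hf a gone) as Hinj.
  rewrite (@hom_gone _ _ f (mor_hom (H_mor _ _ _ Hf))), !ginv1, !gmul1 in Hinj.
  exact (Hinj Hfa).
Qed.

Lemma stabilization_eq_of_mono (A : Obj C) (a : grp C A) :
  (forall A B f, H A B f -> induces_mono Gam f) ->
  stabilization H Gam a <-> Gam A a.
Proof.
  intro H_mono. split; [apply stabilization_mono, H_mono | apply stabilization_id].
Qed.

End StableSubgroupFunction.

Theorem corollary2p11 (C : GrpSubcat) :
  (forall (H : forall A B : Obj C, (grp C A -> grp C B) -> Prop)
          (Gam : forall A : Obj C, grp C A -> Prop),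
      class_of_maps H -> subgroup_function Gam -> H_invariant H Gam ->
      (forall A B f, H A B f -> induces_mono Gam f) ->
      forall A a, stabilization H Gam a <-> Gam A a) /\
  (forall (H : nat -> forall A B : Obj C, (grp C A -> grp C B) -> Prop)
          (Gam : nat -> forall A : Obj C, grp C A -> Prop),
      (forall n, class_of_maps (H n)) ->
      (forall n A B f, H (S n) A B f -> H n A B f) ->
      is_series Gam ->
      (forall n, H_invariant (H n) (Gam n)) ->
      (forall n A B f, H n A B f -> induces_mono (Gam n) f) ->
      forall n A a, stabilization (H n) (Gam n) a <-> Gam n A a).
Proof.
  split.
  - intros H Gam H_class _ _ H_mono A a.
    exact (@stabilization_eq_of_mono C H Gam H_class A a H_mono).
  - intros H Gam H_class _ _ _ H_mono n A a.
    exact (@stabilization_eq_of_mono C (H n) (Gam n) (H_class n) A a (H_mono n)).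
Qed.
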